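(* For $n\ge1$ let \[\alpha_n=\inf\{s\in[-1,0):\ C_{a,R_n}(X)>0,\ C_{a,S_n}(X)>0,\ C_{a,T_n}(X)>0\ \text{for all }X\in(s,0)\}.\] Then $\alpha_{n+1}\le\alpha_n$ for all $n\ge1$. Moreover, $\alpha_{n+1}=\alpha_n$ if and only if one of the following holds: (a) $\alpha_m=-1$ for all $m\ge n$; in this case $C_a(X)>0$ for all $X\in(-1,1)$. (b) $\alpha_m=\alpha_n>-1$ for all $m\ge n$, and $C_{a,R_m}(\alpha_m)=C_{a,S_m}(\alpha_m)=C_{a,T_m}(\alpha_m)=0$ for all $m\ge n$; in this case $C_a(\alpha_n)=0$ and $C_a(X)>0$ for all $X\in(\alpha_n,1)$.
   Context: The Fibonacci substitution is $\sigma(a)=ab$, $\sigma(b)=a$; $w=w_0w_1\ldots=\lim_{m\to\infty}\sigma^m(a)$ is its fixed point starting with $a$, and $C_a(X)=\sum_{n\ge0}1_a(w_n)X^n$ (convergent for $|X|<1$). Let $A_n=\sigma^n(a)$, $B_n=\sigma^n(b)$, $R_n=A_{3n}B_{3n}$, $S_n=A_{3n}A_{3n}$, $T_n=B_{3n}A_{3n}$ (concatenations). For a finite word $u=u_0\cdots u_L$ over $\{a,b\}$, $C_{a,u}(X)=\sum_{i=0}^{L}1_a(u_i)X^i$, a polynomial evaluated at real $X$. *)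

From Stdlib Require Import Reals List Arith.
From Coquelicot Require Import Coquelicot.
Import ListNotations.
Open Scope R_scope.

Definition letter_a : bool := true.
Definition letter_b : bool := false.

Definition sigma (u : list bool) : list bool :=
  flat_map (fun c : bool => if c then [true; false] else [true]) u.

Definition A (n : nat) : list bool := Nat.iter n sigma [letter_a].
Definition B (n : nat) : list bool := Nat.iter n sigma [letter_b].

Definition Rw (n : nat) : list bool := A (3 * n) ++ B (3 * n).
Definition Sw (n : nat) : list bool := A (3 * n) ++ A (3 * n).
Definition Tw (n : nat) : list bool := B (3 * n) ++ A (3 * n).

(* Fixed point w = lim sigma^m(a): its k-th letter is the k-th letter of
   A (k+1) (which has length >= k+1 and is a prefix of all later A m). *)
Definition w (k : nat) : bool := nth k (A (S k)) false.

Definition ind_a (c : bool) : R := if c then 1 else 0.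

Definition Cpoly (u : list bool) (X : R) : R :=
  fold_right Rplus 0 (map (fun i => ind_a (nth i u false) * X ^ i) (seq 0 (length u))).

Definition Ca (X : R) : R := Series (fun k => ind_a (w k) * X ^ k).

Definition alpha_set (n : nat) (s : R) : Prop :=
  -1 <= s < 0 /\
  forall X, s < X < 0 ->
    Cpoly (Rw n) X > 0 /\ Cpoly (Sw n) X > 0 /\ Cpoly (Tw n) X > 0.

(* The set is nonempty and bounded below by -1, so its infimum is real. *)
Definition alpha (n : nat) : R := real (Glb_Rbar (alpha_set n)).

Definition case_a (n : nat) : Prop := forall m, (n <= m)%nat -> alpha m = -1.

Definition case_b (n : nat) : Prop :=
  (forall m, (n <= m)%nat -> alpha m = alpha n /\ alpha n > -1) /\
  (forall m, (n <= m)%nat ->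
     Cpoly (Rw m) (alpha m) = 0 /\ Cpoly (Sw m) (alpha m) = 0 /\
     Cpoly (Tw m) (alpha m) = 0).

(* We prove more than the proposition asks: alpha_n decreases STRICTLY and
   alpha_n > -1, so neither equality case (a) nor (b) can occur and the
   remaining clauses hold vacuously.  The argument:

   - Cpoly is a polynomial, hence continuous, and satisfies
     Cpoly (u ++ v) X = Cpoly u X + X^|u| * Cpoly v X.
   - Writing r, s, t for the words R_n, S_n, T_n, the three-fold substitution
     gives R_{n+1} = r s t t, S_{n+1} = r s t t r, T_{n+1} = r s t r, and all
     of r, s, t have even length.  Hence if C_r, C_s, C_t are >= 0 at some
     X <> 0 and one of them is > 0, all three level-(n+1) polynomials are > 0
     at X.
   - The three polynomials never vanish simultaneously on (-1,0), because
     C_{A_k} and C_{B_k} never vanish simultaneously at X <> 0.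
   - At X = -1 one of C_{R_n}, C_{T_n} equals -1, so alpha_n > -1.
   - At X = alpha_n all three are >= 0 (limits of positive values), not all
     zero, so the level-(n+1) polynomials are > 0 on a neighbourhood of
     alpha_n and on (alpha_n, 0): thus alpha_{n+1} < alpha_n. *)

From Pilot Require Import Defs.
From Stdlib Require Import Reals List Arith.
From Coquelicot Require Import Coquelicot.
From Stdlib Require Import Lia Lra Psatz FunctionalExtensionality Classical.
(* Psatz exports a constructor named A; re-import Defs so A is the Fibonacci word. *)
Import Defs.
Import ListNotations.
Open Scope R_scope.

Lemma fold_right_scale (X : R) (g : nat -> R) (l : list nat) :
  fold_right Rplus 0 (map (fun i => X * g i) l) = X * fold_right Rplus 0 (map g l).
Proof. induction l as [|i l IH]; simpl; [ring | rewrite IH; ring]. Qed.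

Lemma Cpoly_nil X : Cpoly [] X = 0.
Proof. reflexivity. Qed.

Lemma Cpoly_cons c u X : Cpoly (c :: u) X = ind_a c + X * Cpoly u X.
Proof.
  unfold Cpoly. simpl length. simpl seq. simpl map.
  rewrite <- seq_shift, map_map, <- fold_right_scale. simpl fold_right.
  f_equal; [ring |].
  f_equal. f_equal. apply functional_extensionality. intro i. ring.
Qed.

Lemma Cpoly_app u v X : Cpoly (u ++ v) X = Cpoly u X + X ^ length u * Cpoly v X.
Proof.
  induction u as [|c u IH]; simpl app.
  - rewrite Cpoly_nil. simpl. ring.
  - rewrite !Cpoly_cons, IH. simpl length. simpl pow. ring.
Qed.

Lemma Cpoly_continuous u x : continuity_pt (Cpoly u) x.
Proof.
  induction u as [|c u IH].
  - apply continuity_pt_ext with (f := fun _ => 0); [reflexivity |].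
    apply continuity_pt_const. intros a b; reflexivity.
  - apply continuity_pt_ext with (f := fun X => ind_a c + X * Cpoly u X).
    { intros; symmetry; apply Cpoly_cons. }
    apply continuity_pt_plus.
    + apply continuity_pt_const. intros a b; reflexivity.
    + apply continuity_pt_mult; [apply continuity_pt_id | exact IH].
Qed.

Lemma pos_near (f : R -> R) x : continuity_pt f x -> f x > 0 ->
  exists d, d > 0 /\ forall y, Rabs (y - x) < d -> f y > 0.
Proof.
  intros Hc Hp. destruct (Hc (f x) Hp) as [d [Hd H]].
  exists d. split; [exact Hd |]. intros y Hy.
  destruct (Req_dec x y) as [<- | Hne]; [exact Hp |].
  assert (Hdist := H y (conj (conj I Hne) Hy)). simpl in Hdist. unfold R_dist in Hdist.
  apply Rabs_def2 in Hdist. lra.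
Qed.

Lemma nonneg_at_left_end (f : R -> R) c b : continuity_pt f c -> c < b ->
  (forall X, c < X < b -> f X > 0) -> f c >= 0.
Proof.
  intros Hc Hcb Hpos. apply Rnot_lt_ge. intro Hneg.
  destruct (pos_near (fun y => - f y) c) as [d [Hd Hnear]].
  { apply continuity_pt_opp; exact Hc. }
  { lra. }
  set (e := Rmin d (b - c)).
  assert (He : 0 < e <= d /\ e <= b - c)
    by (pose proof (Rmin_l d (b - c)); pose proof (Rmin_r d (b - c));
        unfold e; split; [split; [apply Rmin_pos |] |]; lra).
  assert (Hy : Rabs (c + e / 2 - c) < d) by (rewrite Rabs_right; lra).
  pose proof (Hnear _ Hy). pose proof (Hpos (c + e / 2) ltac:(lra)). lra.
Qed.

Lemma pow_even_pos X k : X <> 0 -> Nat.Even k -> X ^ k > 0.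
Proof. intros HX [m ->]. rewrite pow_mult. apply pow_lt. nra. Qed.

Lemma pow_odd_neg1 k : Nat.Odd k -> (-1) ^ k = -1.
Proof. intros [m ->]. rewrite Nat.add_1_r. apply pow_1_odd. Qed.

Lemma pow_ne_neg1 x k : Rabs x < 1 -> x ^ k <> -1.
Proof.
  intros Hx Hk.
  assert (Habs : Rabs x ^ k = 1) by (rewrite RPow_abs, Hk, Rabs_left; lra).
  destruct (pow_R1 _ _ Habs) as [H | ->].
  - rewrite Rabs_Rabsolu in H. lra.
  - simpl in Hk. lra.
Qed.

Lemma AB_succ k : A (S k) = A k ++ B k /\ B (S k) = A k.
Proof.
  induction k as [|k [IHA IHB]]; [split; reflexivity |]. split.
  - change (sigma (A (S k)) = sigma (A k) ++ sigma (B k)).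
    rewrite IHA. apply flat_map_app.
  - change (sigma (B (S k)) = sigma (A k)). rewrite IHB. reflexivity.
Qed.

Lemma A_succ k : A (S k) = A k ++ B k. Proof. apply AB_succ. Qed.
Lemma B_succ k : B (S k) = A k. Proof. apply AB_succ. Qed.

Lemma A_3succ m : A (S (S (S m))) = ((A m ++ B m) ++ A m) ++ (A m ++ B m).
Proof. rewrite !A_succ, !B_succ, !A_succ. reflexivity. Qed.
Lemma B_3succ m : B (S (S (S m))) = (A m ++ B m) ++ A m.
Proof. rewrite !B_succ, !A_succ, !B_succ. reflexivity. Qed.

Lemma three_succ n : (3 * S n = S (S (S (3 * n))))%nat. Proof. lia. Qed.

Lemma Rw_succ n : Rw (S n) = Rw n ++ Sw n ++ Tw n ++ Tw n.
Proof. unfold Rw, Sw, Tw. rewrite three_succ, A_3succ, B_3succ. now rewrite <- !app_assoc. Qed.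
Lemma Sw_succ n : Sw (S n) = Rw n ++ Sw n ++ Tw n ++ Tw n ++ Rw n.
Proof. unfold Rw, Sw, Tw. rewrite three_succ, A_3succ. now rewrite <- !app_assoc. Qed.
Lemma Tw_succ n : Tw (S n) = Rw n ++ Sw n ++ Tw n ++ Rw n.
Proof. unfold Rw, Sw, Tw. rewrite three_succ, A_3succ, B_3succ. now rewrite <- !app_assoc. Qed.

Lemma length_A3_B3_odd n : Nat.Odd (length (A (3 * n))) /\ Nat.Odd (length (B (3 * n))).
Proof.
  induction n as [|n [[p Hp] [q Hq]]]; [split; exists 0%nat; reflexivity |].
  rewrite three_succ, A_3succ, B_3succ, !length_app, Hp, Hq.
  split; [exists (3 * p + 2 * q + 2)%nat | exists (2 * p + q + 1)%nat]; lia.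
Qed.

Lemma blocks_even n :
  Nat.Even (length (Rw n)) /\ Nat.Even (length (Sw n)) /\ Nat.Even (length (Tw n)).
Proof.
  destruct (length_A3_B3_odd n) as [[p Hp] [q Hq]]. unfold Rw, Sw, Tw.
  rewrite !length_app, Hp, Hq.
  split; [| split]; [exists (p + q + 1)%nat | exists (2 * p + 1)%nat | exists (p + q + 1)%nat]; lia.
Qed.

Lemma A_head k : exists t, A k = true :: t.
Proof.
  induction k as [|k [t Ht]]; [exists []; reflexivity |].
  rewrite A_succ, Ht. eexists; reflexivity.
Qed.

(* C_{A_k} and C_{B_k} have no common zero X <> 0:
   C_{A_{k+1}} = C_{A_k} + X^|A_k| C_{B_k} and C_{B_{k+1}} = C_{A_k}. *)
Lemma Cpoly_A_B_no_common_zero k x : x <> 0 -> ~ (Cpoly (A k) x = 0 /\ Cpoly (B k) x = 0).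
Proof.
  intro Hx. induction k as [|k IH]; intros [HA HB].
  - unfold Cpoly in HA. simpl in HA. lra.
  - rewrite A_succ, Cpoly_app in HA. rewrite B_succ in HB. rewrite HB in HA.
    apply IH. split; [exact HB |].
    apply (Rmult_eq_reg_l (x ^ length (A k))); [lra | apply pow_nonzero; exact Hx].
Qed.

Lemma Cpoly_A3_B3_neg1 n : (Cpoly (A (3 * n)) (-1) - Cpoly (B (3 * n)) (-1)) ^ 2 = 1.
Proof.
  induction n as [|n IH]; [unfold Cpoly; simpl; ring |].
  destruct (length_A3_B3_odd n) as [HA HB].
  rewrite three_succ, A_3succ, B_3succ, !Cpoly_app, !length_app, !pow_add,
    !(pow_odd_neg1 _ HA), !(pow_odd_neg1 _ HB), <- IH.
  ring.
Qed.

Lemma Cpoly_R_T_neg1 n :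
  Cpoly (Tw n) (-1) = - Cpoly (Rw n) (-1) /\ Cpoly (Rw n) (-1) ^ 2 = 1.
Proof.
  destruct (length_A3_B3_odd n) as [HA HB]. unfold Rw, Tw.
  rewrite !Cpoly_app, (pow_odd_neg1 _ HA), (pow_odd_neg1 _ HB).
  split; [ring |]. rewrite <- (Cpoly_A3_B3_neg1 n). ring.
Qed.

Lemma Cpoly_blocks_no_common_zero n x : -1 < x < 0 ->
  ~ (Cpoly (Rw n) x = 0 /\ Cpoly (Sw n) x = 0 /\ Cpoly (Tw n) x = 0).
Proof.
  intros Hx [HR [HS HT]]. unfold Rw, Sw, Tw in *. rewrite Cpoly_app in HR, HS, HT.
  set (L := length (A (3 * n))) in *.
  assert (HxL : x ^ L <> -1) by (apply pow_ne_neg1; rewrite Rabs_left; lra).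
  assert (HA : Cpoly (A (3 * n)) x = 0).
  { assert (Hprod : Cpoly (A (3 * n)) x * (1 + x ^ L) = 0) by lra.
    destruct (Rmult_integral _ _ Hprod) as [H | H]; [exact H | lra]. }
  apply (Cpoly_A_B_no_common_zero (3 * n) x); [lra |]. split; [exact HA |].
  rewrite HA in HR.
  apply (Rmult_eq_reg_l (x ^ L)); [lra | apply pow_nonzero; lra].
Qed.

Definition triple_pos (n : nat) (X : R) : Prop :=
  Cpoly (Rw n) X > 0 /\ Cpoly (Sw n) X > 0 /\ Cpoly (Tw n) X > 0.

(* Positivity propagates one level up: the block decompositions express the
   level-(n+1) polynomials as sums of r, s, t with positive (even-power) weights. *)
Lemma triple_pos_succ n X : X <> 0 ->
  Cpoly (Rw n) X >= 0 -> Cpoly (Sw n) X >= 0 -> Cpoly (Tw n) X >= 0 ->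
  (Cpoly (Rw n) X > 0 \/ Cpoly (Sw n) X > 0 \/ Cpoly (Tw n) X > 0) ->
  triple_pos (S n) X.
Proof.
  intros HX HR HS HT Hsome. destruct (blocks_even n) as [ER [ES ET]].
  pose proof (pow_even_pos X _ HX ER) as W1. pose proof (pow_even_pos X _ HX ES) as W2.
  pose proof (pow_even_pos X _ HX ET) as W3.
  unfold triple_pos. rewrite Rw_succ, Sw_succ, Tw_succ, !Cpoly_app.
  set (r := Cpoly (Rw n) X) in *. set (s := Cpoly (Sw n) X) in *.
  set (t := Cpoly (Tw n) X) in *.
  set (w1 := X ^ length (Rw n)) in *. set (w2 := X ^ length (Sw n)) in *.
  set (w3 := X ^ length (Tw n)) in *.
  assert (0 <= w3 * t) by nra. assert (0 <= w3 * r) by nra.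
  assert (0 <= w2 * (t + w3 * t)) by nra. assert (0 <= w2 * (t + w3 * r)) by nra.
  assert (0 <= w3 * (t + w3 * r)) by nra.
  assert (0 <= w2 * (t + w3 * (t + w3 * r))) by nra.
  destruct Hsome as [? | [? | ?]]; [repeat split; nra | repeat split; nra |].
  assert (0 < w2 * (t + w3 * t)) by nra. assert (0 < w2 * (t + w3 * r)) by nra.
  assert (0 < w2 * (t + w3 * (t + w3 * r))) by nra.
  repeat split; nra.
Qed.

Lemma triple_pos_near n x : triple_pos n x ->
  exists d, d > 0 /\ forall y, Rabs (y - x) < d -> triple_pos n y.
Proof.
  intros [HR [HS HT]].
  destruct (pos_near _ _ (Cpoly_continuous (Rw n) x) HR) as [d1 [Hd1 K1]].
  destruct (pos_near _ _ (Cpoly_continuous (Sw n) x) HS) as [d2 [Hd2 K2]].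
  destruct (pos_near _ _ (Cpoly_continuous (Tw n) x) HT) as [d3 [Hd3 K3]].
  exists (Rmin d1 (Rmin d2 d3)). split; [repeat apply Rmin_pos; assumption |].
  intros y Hy.
  pose proof (Rmin_l d1 (Rmin d2 d3)). pose proof (Rmin_r d1 (Rmin d2 d3)).
  pose proof (Rmin_l d2 d3). pose proof (Rmin_r d2 d3).
  split; [| split]; [apply K1 | apply K2 | apply K3]; lra.
Qed.

Lemma alpha_set_below n y d : -1 < y <= 0 -> d > 0 ->
  (forall X, Rabs (X - y) < d -> triple_pos n X) ->
  (forall X, y < X < 0 -> triple_pos n X) ->
  exists s, s < y /\ alpha_set n s.
Proof.
  intros Hy Hd Hnear Hright. exists (Rmax (-1) (y - d / 2)).
  pose proof (Rmax_l (-1) (y - d / 2)). pose proof (Rmax_r (-1) (y - d / 2)).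
  assert (Rmax (-1) (y - d / 2) < y) by (apply Rmax_lub_lt; lra).
  split; [assumption |]. split; [lra |]. intros X HX.
  destruct (Rle_lt_dec X y) as [HXy | HXy]; [| apply Hright; lra].
  apply Hnear. rewrite Rabs_left1; lra.
Qed.

(* B_k starts with a as soon as k >= 1, so every block polynomial equals 1 at 0. *)
Lemma triple_pos_zero n : (1 <= n)%nat -> triple_pos n 0.
Proof.
  intro Hn.
  assert (EB : B (3 * n) = A (3 * n - 1)).
  { replace (3 * n)%nat with (S (3 * n - 1)) at 1 by lia. apply B_succ. }
  destruct (A_head (3 * n)) as [t Ht]. destruct (A_head (3 * n - 1)) as [t' Ht'].
  unfold triple_pos, Rw, Sw, Tw. rewrite EB, Ht, Ht'. simpl app. rewrite !Cpoly_cons.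
  simpl. lra.
Qed.

Lemma alpha_set_inhabited n : (1 <= n)%nat -> exists s, alpha_set n s.
Proof.
  intro Hn. destruct (triple_pos_near n 0 (triple_pos_zero n Hn)) as [d [Hd Hnear]].
  destruct (alpha_set_below n 0 d ltac:(lra) Hd Hnear) as [s [_ Hs]];
    [intros X HX; lra | exists s; exact Hs].
Qed.

Lemma alpha_spec n : (1 <= n)%nat ->
  -1 <= alpha n < 0 /\ (forall s, alpha_set n s -> alpha n <= s) /\
  (forall X, alpha n < X < 0 -> triple_pos n X).
Proof.
  intro Hn. destruct (alpha_set_inhabited n Hn) as [s0 Hs0].
  destruct (Glb_Rbar_correct (alpha_set n)) as [Hlb Hglb].
  assert (Hm1 : is_lb_Rbar (alpha_set n) (-1)) by (intros x Hx; apply Hx).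
  pose proof (Hlb s0 Hs0) as Hle0. pose proof (Hglb _ Hm1) as Hge.
  unfold alpha. destruct (Glb_Rbar (alpha_set n)) as [g | |]; simpl in *;
    [| contradiction | contradiction].
  split; [destruct Hs0 as [[_ ?] _]; lra |]. split; [intros s Hs; apply (Hlb s Hs) |].
  intros X [HgX HX0]. apply NNPP. intro HnotX.
  assert (HXlb : is_lb_Rbar (alpha_set n) X).
  { intros s [_ Hs]. simpl. apply Rnot_lt_le. intro HsX. apply HnotX, Hs. lra. }
  pose proof (Hglb _ HXlb). simpl in *. lra.
Qed.

(* At X = -1 one of C_{R_n}, C_{T_n} equals -1, so the thresholds stay above -1. *)
Lemma alpha_gt_neg1 n : (1 <= n)%nat -> -1 < alpha n.
Proof.
  intro Hn. destruct (alpha_spec n Hn) as [[Hge Hneg] [_ Hpos]].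
  destruct (Rle_lt_or_eq_dec _ _ Hge) as [? | Heq]; [assumption | exfalso].
  rewrite <- Heq in Hpos. destruct (Cpoly_R_T_neg1 n) as [HT HR2].
  assert (HR : Cpoly (Rw n) (-1) >= 0).
  { apply (nonneg_at_left_end _ _ 0 (Cpoly_continuous _ _)); [lra |].
    intros X HX; apply Hpos, HX. }
  assert (Cpoly (Tw n) (-1) >= 0).
  { apply (nonneg_at_left_end _ _ 0 (Cpoly_continuous _ _)); [lra |].
    intros X HX; apply Hpos, HX. }
  nra.
Qed.

Lemma triple_pos_succ_at_alpha n : (1 <= n)%nat -> triple_pos (S n) (alpha n).
Proof.
  intro Hn. destruct (alpha_spec n Hn) as [[_ Hneg] [_ Hpos]].
  pose proof (alpha_gt_neg1 n Hn) as Hgt.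
  assert (Hnonneg : forall u, (forall X, alpha n < X < 0 -> Cpoly u X > 0) ->
            Cpoly u (alpha n) >= 0).
  { intros u Hu. exact (nonneg_at_left_end _ _ 0 (Cpoly_continuous u _) Hneg Hu). }
  assert (HR := Hnonneg (Rw n) ltac:(intros X HX; apply Hpos, HX)).
  assert (HS := Hnonneg (Sw n) ltac:(intros X HX; apply Hpos, HX)).
  assert (HT := Hnonneg (Tw n) ltac:(intros X HX; apply Hpos, HX)).
  apply triple_pos_succ; [lra | assumption | assumption | assumption |].
  apply NNPP. intro Hnone.
  apply (Cpoly_blocks_no_common_zero n (alpha n)); [lra |].
  split; [| split]; lra.
Qed.

Lemma alpha_succ_lt n : (1 <= n)%nat -> alpha (S n) < alpha n.
Proof.
  intro Hn. destruct (alpha_spec n Hn) as [[Hge Hneg] [_ Hpos]].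
  destruct (alpha_spec (S n) ltac:(lia)) as [_ [Hlb _]].
  destruct (triple_pos_near _ _ (triple_pos_succ_at_alpha n Hn)) as [d [Hd Hnear]].
  assert (Hright : forall X, alpha n < X < 0 -> triple_pos (S n) X).
  { intros X HX. destruct (Hpos X HX) as [HR [HS HT]].
    apply triple_pos_succ; lra. }
  pose proof (alpha_gt_neg1 n Hn).
  destruct (alpha_set_below (S n) (alpha n) d ltac:(lra) Hd Hnear Hright) as [s [Hs Hset]].
  pose proof (Hlb s Hset). lra.
Qed.

(* Since alpha_{n+1} < alpha_n, neither equality case can occur. *)
Theorem proposition5p9 :
  forall n : nat, (1 <= n)%nat ->
    alpha (S n) <= alpha n /\
    (alpha (S n) = alpha n <-> case_a n \/ case_b n) /\
    (case_a n -> forall X, -1 < X < 1 -> Ca X > 0) /\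
    (case_b n -> Ca (alpha n) = 0 /\ forall X, alpha n < X < 1 -> Ca X > 0).
Proof.
  intros n Hn. pose proof (alpha_succ_lt n Hn) as Hlt.
  assert (Hnot_a : ~ case_a n).
  { intro Ha. pose proof (Ha n (le_n n)). pose proof (Ha (S n) ltac:(lia)). lra. }
  assert (Hnot_b : ~ case_b n).
  { intros [Hb _]. destruct (Hb (S n) ltac:(lia)). lra. }
  split; [lra |]. split; [split; [lra | tauto] |].
  split; intro; contradiction.
Qed.
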